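(* Let $k>1$ and $l>0$ be integers and let $t,t'$ be non-negative integers. Then there exists a positive integer $x$ such that the $k$-adic expansion $xl=\sum_{q=1}^{r}s_{xl,q}k^{w_{xl}(q)}$ (with $1\le s_{xl,q}\le k-1$ and $0\le w_{xl}(1)<w_{xl}(2)<\dots$) has at least two terms, $s_{xl,1}=1$ and $w_{xl}(2)-w_{xl}(1)>t$. Moreover, there exists a positive integer $X$ such that the $k$-adic expansion $Xl=\sum_{q}s_{Xl,q}k^{w_{Xl}(q)}$ has at least two terms, $s_{Xl,1}=1$, $w_{Xl}(2)-w_{Xl}(1)>t'$, and $w_{Xl}(1)=w_{xl}(1)$.
   Context: The $k$-adic expansion of a positive integer $m$ is the unique representation $m=\sum_{q=1}^{r}s_{m,q}k^{w_m(q)}$ with digits $1\le s_{m,q}\le k-1$ and exponents $0\le w_m(1)<w_m(2)<\dots<w_m(r)$. *)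

From mathcomp Require Import all_boot.
Set Implicit Arguments. Unset Strict Implicit. Unset Printing Implicit Defensive.

(* The exponents are the
   positions of the nonzero base-k digits, in increasing order; the digit
   s_{m,q} is the base-k digit at position w_m(q). *)

Definition kdigit (k m i : nat) : nat := (m %/ k ^ i) %% k.

(* increasing list of exponents [w_m(1); w_m(2); ...; w_m(r)]
   (all nonzero digits of m are at positions <= m when k > 1) *)
Definition kexps (k m : nat) : seq nat :=
  [seq i <- iota 0 m.+1 | kdigit k m i != 0].

Definition kterms (k m : nat) : nat := size (kexps k m).

(* w_m(q), 1-indexed *)
Definition kw (k m q : nat) : nat := nth 0 (kexps k m) q.-1.

Definition ks (k m q : nat) : nat := kdigit k m (kw k m q).

From mathcomp Require Import all_boot zify.

Set Implicit Arguments.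
Unset Strict Implicit.
Unset Printing Implicit Defensive.

(* By pigeonhole, k ^ (i + p) = k ^ i (mod l) for some i and p > 0, so l divides
   k ^ (i + P) - k ^ i whenever p divides P.  Then
     k ^ i + k ^ (i + P) * (2 l - 1) = 2 l k ^ (i + P) - (k ^ (i + P) - k ^ i)
   is a multiple of l whose k-adic expansion starts with 1 * k ^ i, all further
   exponents being at least i + P.  Choosing P > t, resp. P > t', yields x and
   X with the same first exponent i. *)

Section KDigits.

Variable k : nat.
Hypothesis k_gt1 : 1 < k.

Let k_gt0 : 0 < k. Proof. exact: ltnW. Qed.
Let expk_gt0 n : 0 < k ^ n. Proof. by rewrite expn_gt0 k_gt0. Qed.

Lemma kdigit_addMl a b j n : n < j -> kdigit k (a + k ^ j * b) n = kdigit k a n.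
Proof.
move=> ltnj; have -> : k ^ j * b = k * k ^ (j - n.+1) * b * k ^ n.
  by rewrite -expnS mulnAC -expnD subnSK // subnK // ltnW.
by rewrite /kdigit addnC divnMDl ?expk_gt0 // -mulnA [k * _]mulnC modnMDl.
Qed.

Lemma kdigit_addMr a b j n :
  a < k ^ j -> kdigit k (a + k ^ j * b) (j + n) = kdigit k b n.
Proof.
move=> ltak; rewrite /kdigit expnD divnMA addnC mulnC divnMDl ?expk_gt0 //.
by rewrite (divn_small ltak) addn0.
Qed.

Lemma kdigit_expn i n : kdigit k (k ^ i) n = (n == i).
Proof.
rewrite /kdigit; case: ltngtP => [ltni | ltin | ->].
- by rewrite -expnB ?k_gt0 ?(ltnW ltni) // -(subnSK ltni) expnS modnMr.
- by rewrite divn_small ?mod0n ?ltn_exp2l.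
- by rewrite divnn expk_gt0 modn_small.
Qed.

Lemma kdigit_trunc_log b : 0 < b -> kdigit k b (trunc_log k b) != 0.
Proof.
move=> b_gt0; have /andP[lob hib] := trunc_log_bounds k_gt1 b_gt0.
by rewrite /kdigit modn_small ?ltn_divLR -?expnS // -lt0n divn_gt0.
Qed.

Lemma kexps_cons N i J :
    i < J -> J <= N.+1 -> (forall n, n < J -> (kdigit k N n != 0) = (n == i)) ->
  kexps k N = i :: [seq n <- iota J (N.+1 - J) | kdigit k N n != 0].
Proof.
move=> ltiJ leJN digits_below.
rewrite /kexps -{1}(subnKC leJN) iotaD filter_cat add0n.
rewrite (@eq_in_filter _ _ (pred1 i)) ?filter_pred1_uniq ?iota_uniq ?mem_iota //.
by move=> n; rewrite mem_iota => /andP[_]; apply: digits_below.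
Qed.

Lemma kexpansion_expn_addMl i J b : i < J -> 0 < b ->
  let N := k ^ i + k ^ J * b in
  [/\ kw k N 1 = i, ks k N 1 = 1, 2 <= kterms k N & J <= kw k N 2].
Proof.
move=> ltiJ b_gt0 N.
set j := J + trunc_log k b.
have le_j_N : j <= N.
  apply: leq_trans (ltnW (ltn_expl _ k_gt1)) _.
  by rewrite /N expnD (leq_trans _ (leq_addl _ _)) // leq_mul2l trunc_logP ?orbT.
have digits_below n : n < J -> (kdigit k N n != 0) = (n == i).
  by move=> ltnJ; rewrite kdigit_addMl // kdigit_expn; case: (n == i).
have digit_j : kdigit k N j != 0.
  by rewrite kdigit_addMr ?ltn_exp2l ?kdigit_trunc_log.
set s := [seq n <- iota J (N.+1 - J) | kdigit k N n != 0].
have kexpsN : kexps k N = i :: s by apply: kexps_cons => //; lia.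
have s_gt0 : 0 < size s.
  by rewrite size_filter_gt0; apply/hasP; exists j; rewrite // mem_iota; lia.
have head_s : J <= nth 0 s 0.
  have : nth 0 s 0 \in s by rewrite mem_nth.
  by rewrite mem_filter mem_iota => /and3P[_ ->].
rewrite /ks /kw /kterms kexpsN /=.
by rewrite kdigit_addMl // kdigit_expn eqxx.
Qed.

End KDigits.

Lemma expn_mod_collision k l : 0 < l -> exists i p, 0 < p /\ k ^ (i + p) = k ^ i %[mod l].
Proof.
move=> l_gt0; pose f (n : 'I_l.+1) : 'I_l := Ordinal (ltn_pmod (k ^ n) l_gt0).
have /injectivePn[m [n neq_mn /(congr1 val) /= eq_fmn]] : ~~ injectiveb f.
  by apply/injectiveP => /leq_card; rewrite !card_ord ltnn.
case: (ltngtP m n) => [ltmn | ltnm | /val_inj eq_mn]; last by rewrite eq_mn eqxx in neq_mn.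
- by exists m, (n - m); rewrite subnKC ?subn_gt0 // ltnW.
- by exists n, (m - n); rewrite subnKC ?subn_gt0 // ltnW.
Qed.

Lemma expn_mod_period k l i p m :
  k ^ (i + p) = k ^ i %[mod l] -> k ^ (i + p * m) = k ^ i %[mod l].
Proof.
move=> period; elim: m => [|m IHm]; first by rewrite muln0 addn0.
by rewrite mulnS addnCA expnD -modnMmr IHm modnMmr -expnD addnC period.
Qed.

Lemma kexpansion_multiple_gap k l i p T :
    1 < k -> 0 < l -> 0 < p -> k ^ (i + p) = k ^ i %[mod l] ->
  exists x, [/\ 0 < x, 2 <= kterms k (x * l), ks k (x * l) 1 = 1,
                T < kw k (x * l) 2 - kw k (x * l) 1 & kw k (x * l) 1 = i].
Proof.
move=> k_gt1 l_gt0 p_gt0 period.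
set P := p * T.+1; set N := k ^ i + k ^ (i + P) * (2 * l - 1).
have ltTP : T < P by rewrite /P leq_pmull.
have le_ki_kiP : k ^ i <= k ^ (i + P) by rewrite leq_pexp2l ?leq_addr // ltnW.
have dvd_l_N : l %| N.
  have dvd_l_diff : l %| k ^ (i + P) - k ^ i.
    by rewrite -eqn_mod_dvd // expn_mod_period.
  have -> : N = l * (2 * k ^ (i + P)) - (k ^ (i + P) - k ^ i).
    rewrite /N; move: (k ^ i) (k ^ (i + P)) le_ki_kiP => A B le_AB.
    by have := leq_pmull B l_gt0; clear -le_AB; nia.
  by rewrite dvdn_sub ?dvdn_mulr.
have ltiJ : i < i + P by rewrite -{1}[i]addn0 ltn_add2l (leq_ltn_trans _ ltTP).
have b_gt0 : 0 < 2 * l - 1 by lia.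
have [w1 s1 terms w2] := kexpansion_expn_addMl k_gt1 ltiJ b_gt0.
have N_gt0 : 0 < N by rewrite addn_gt0 expn_gt0 ltnW.
exists (N %/ l); rewrite divnK // divn_gt0 // dvdn_leq //.
by split; rewrite ?/N //; lia.
Qed.

Theorem lemma3p1 (k l t t' : nat) (hk : 1 < k) (hl : 0 < l) :
  exists x : nat,
    [/\ 0 < x, 2 <= kterms k (x * l), ks k (x * l) 1 = 1,
        t < kw k (x * l) 2 - kw k (x * l) 1 &
        exists X : nat,
          [/\ 0 < X, 2 <= kterms k (X * l), ks k (X * l) 1 = 1,
              t' < kw k (X * l) 2 - kw k (X * l) 1 &
              kw k (X * l) 1 = kw k (x * l) 1]].
Proof.
have [i [p [p_gt0 period]]] := expn_mod_collision k hl.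
have [x [x_gt0 x_terms x_s1 x_gap x_w1]] := kexpansion_multiple_gap t hk hl p_gt0 period.
have [X [X_gt0 X_terms X_s1 X_gap X_w1]] := kexpansion_multiple_gap t' hk hl p_gt0 period.
by exists x; split => //; exists X; split; rewrite // X_w1.
Qed.
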